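(* Let $a, b \ge 2$ be even integers, at least one of which is not divisible by four. Then $R_\mathrm{cyc}(M_a^\mathrm{nest}, M_b^\mathrm{nest}) = a + b - 2$.
   Context: All graphs are finite, simple and undirected, and a graph of order $n$ has vertex set $\{0,1,\ldots,n-1\}$; $K_n$ is the complete graph on $\{0,\ldots,n-1\}$. A $2$-edge-coloring of $K_n$ assigns each edge a color in $\{1,2\}$. For a graph $H$ and such a coloring, an embedding of $H$ in color $j$ is an injective map $\varphi\colon V(H)\to V(K_n)$ such that for every edge $uv$ of $H$ the edge $\{\varphi(u),\varphi(v)\}$ has color $j$; it is increasing up to a cyclic permutation if there exists $t\in V(H)$ such that $(\varphi(t),\ldots,\varphi(|H|-1),\varphi(0),\ldots,\varphi(t-1))$ is increasing. The cyclic Ramsey number $R_\mathrm{cyc}(H_1,H_2)$ is the smallest $n$ such that every $2$-edge-coloring of $K_n$ admits an embedding of $H_1$ in color $1$ or of $H_2$ in color $2$ that is increasing up to a cyclic permutation. For even $n\ge2$, the nested matching $M_n^\mathrm{nest}$ is the graph of order $n$ whose edges are $\{v,n-1-v\}$ for $0\le v\le n/2-1$. *)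

From mathcomp Require Import all_boot.
Set Implicit Arguments. Unset Strict Implicit. Unset Printing Implicit Defensive.

(* A graph of order h has vertex set 'I_h = {0,...,h-1}; its edges are given
   by a symmetric relation E : rel 'I_h. *)

Definition nest_edge (h : nat) : rel 'I_h :=
  fun u v => ((val u < h./2) && (val v == h.-1 - val u))
          || ((val v < h./2) && (val u == h.-1 - val v)).

(* 2-edge-colorings of K_n: a symmetric map on pairs of vertices with
   values in 'I_2 (color 1 <-> ord0, color 2 <-> ord_max); the values on
   the diagonal are irrelevant. *)
Definition coloring (n : nat) := 'I_n -> 'I_n -> 'I_2.
Definition sym_coloring n (c : coloring n) : Prop :=
  forall x y, c x y = c y x.

Definition embedding_in_color h n (E : rel 'I_h) (c : coloring n)
    (j : 'I_2) (phi : 'I_h -> 'I_n) : Prop :=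
  injective phi /\ forall u v, E u v -> c (phi u) (phi v) = j.

(* increasing up to a cyclic permutation: there is t such that
   (phi t, ..., phi (h-1), phi 0, ..., phi (t-1)) is increasing *)
Definition cyc_increasing h n (phi : 'I_h -> 'I_n) : Prop :=
  exists t : 'I_h, forall u v : 'I_h,
    (val u + h - val t) %% h < (val v + h - val t) %% h ->
    val (phi u) < val (phi v).
(* Note: vertex u sits at position (u - t) mod h of the rotated sequence
   (t, ..., h-1, 0, ..., t-1). *)

Definition cyc_ramsey_prop h1 (E1 : rel 'I_h1) h2 (E2 : rel 'I_h2)
    (n : nat) : Prop :=
  forall c : coloring n, sym_coloring c ->
    (exists phi : 'I_h1 -> 'I_n,
        embedding_in_color E1 c ord0 phi /\ cyc_increasing phi) \/
    (exists phi : 'I_h2 -> 'I_n,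
        embedding_in_color E2 c ord_max phi /\ cyc_increasing phi).

Definition Rcyc_eq h1 (E1 : rel 'I_h1) h2 (E2 : rel 'I_h2) (N : nat) : Prop :=
  cyc_ramsey_prop E1 E2 N /\ forall m, m < N -> ~ cyc_ramsey_prop E1 E2 m.

From mathcomp Require Import all_boot zify.
Set Implicit Arguments. Unset Strict Implicit. Unset Printing Implicit Defensive.

(* Write a = 2k and b = 2l.  Upper bound: K_n with n = a + b - 2 has k + l - 1
   nested pairs {i, n-1-i}; at least k of them have color 1 or at least l have
   color 2, and k nested pairs of one color carry an increasing copy of
   M_2k^nest.  Lower bound: say k is odd, and view the m <= a + b - 3 =: n0
   vertices as points of a cycle of length n0; color an edge 1 iff its ends are
   at cyclic distance less than k.  A cyclically increasing embedding of an
   h-vertex graph does not decrease cyclic distances (from the h-cycle to the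
   n0-cycle), and since k is odd M_2k^nest has an edge between antipodal
   vertices of the 2k-cycle, so there is no copy of it in color 1.  A copy of
   M_2l^nest in color 2 has two edges between cyclically consecutive vertices,
   so the n0-cycle would contain two arcs of length at least k and 2l - 2
   further arcs, whence 2k + 2l - 2 <= n0, which is false. *)

Definition cyc_dist (n x y : nat) : nat :=
  minn (x - y + (y - x)) (n - (x - y + (y - x))).

Lemma cyc_distC n x y : cyc_dist n x y = cyc_dist n y x.
Proof. by rewrite /cyc_dist addnC. Qed.

Definition cyc_pos h (t u : 'I_h) : nat := (u + h - t) %% h.

Section CyclicPositions.

Variables (h : nat) (t : 'I_h).

Lemma cyc_posE u : cyc_pos t u = if t <= u then u - t else u + h - t.
Proof.
rewrite /cyc_pos; have := ltn_ord u; have := ltn_ord t.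
case: ifP => [le_tu | lt_ut] lt_th lt_uh; last by rewrite modn_small //; lia.
have -> : u + h - t = u - t + h by lia.
by rewrite modnDr modn_small //; lia.
Qed.

Lemma cyc_pos_lt u : cyc_pos t u < h.
Proof. by rewrite cyc_posE; have := ltn_ord u; have := ltn_ord t; case: ifP; lia. Qed.

Lemma cyc_pos_inj : injective (cyc_pos t).
Proof.
move=> u v; rewrite !cyc_posE => E; apply: ord_inj.
move: E; have := ltn_ord u; have := ltn_ord v.
by have := ltn_ord t; do 2 case: ifP; lia.
Qed.

Lemma cyc_pos_surj p : p < h -> exists u, cyc_pos t u = p.
Proof.
move=> lt_ph; have := ltn_ord t => lt_th.
case: (ltnP (p + t) h) => [lt | ge].
  by exists (Ordinal lt); rewrite cyc_posE /=; case: ifP; lia.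
have lt : p + t - h < h by lia.
by exists (Ordinal lt); rewrite cyc_posE /=; case: ifP; lia.
Qed.

Lemma cyc_pos_dist u v : cyc_dist h (cyc_pos t u) (cyc_pos t v) = cyc_dist h u v.
Proof.
rewrite !cyc_posE /cyc_dist; have := ltn_ord u; have := ltn_ord v.
by have := ltn_ord t; do 2 case: ifP; lia.
Qed.

Lemma cyc_pos_succ (u v : 'I_h) :
  val v = u.+1 %% h -> cyc_pos t v = (cyc_pos t u).+1 %% h.
Proof.
have succ_mod x : x < h -> x.+1 %% h = if x.+1 < h then x.+1 else 0.
  move=> lt_xh; case: ltnP => [/modn_small // | ge].
  by rewrite (_ : x.+1 = h) ?modnn //; lia.
move=> Ev; rewrite succ_mod ?cyc_pos_lt // !cyc_posE Ev succ_mod //.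
by have := ltn_ord u; have := ltn_ord t; repeat case: ifP; lia.
Qed.

End CyclicPositions.

Section CyclicallyIncreasing.

Variables (h m : nat) (phi : 'I_h -> 'I_m) (t : 'I_h).
Hypothesis phi_inc : forall u v, cyc_pos t u < cyc_pos t v -> phi u < phi v.

Lemma cyc_pos_gap u v :
  cyc_pos t u <= cyc_pos t v -> phi u + (cyc_pos t v - cyc_pos t u) <= phi v.
Proof.
suff gap d w : cyc_pos t w = cyc_pos t u + d -> phi u + d <= phi w.
  by move=> le_uv; apply: gap; lia.
elim: d w => [|d IH] w Ew; first by rewrite addn0 (cyc_pos_inj (etrans Ew (addn0 _))).
have [w' Ew'] : exists w', cyc_pos t w' = cyc_pos t u + d.
  by apply: cyc_pos_surj; have := cyc_pos_lt t w; lia.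
by have := IH w' Ew'; have := phi_inc (u := w') (v := w); rewrite Ew Ew'; lia.
Qed.

(* The arc of the m-cycle from phi v back around to phi u. *)
Lemma cyc_pos_wrap u v :
  cyc_pos t u <= cyc_pos t v -> phi v + (h - (cyc_pos t v - cyc_pos t u)) <= phi u + m.
Proof.
move=> le_uv; have h_gt0 : 0 < h by have := ltn_ord t; lia.
have [w0 E0] := cyc_pos_surj t h_gt0.
have [w1 E1] : exists w1, cyc_pos t w1 = h.-1 by apply: cyc_pos_surj; lia.
have := cyc_pos_gap (u := w0) (v := u); rewrite E0.
have := cyc_pos_gap (u := v) (v := w1); rewrite E1.
by have := ltn_ord (phi w1); have := cyc_pos_lt t v; lia.
Qed.

End CyclicallyIncreasing.

Lemma cyc_increasing_dist h m n0 (phi : 'I_h -> 'I_m) (u v : 'I_h) :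
  m <= n0 -> cyc_increasing phi -> cyc_dist h u v <= cyc_dist n0 (phi u) (phi v).
Proof.
move=> le_mn [t phi_inc]; rewrite -(cyc_pos_dist t).
wlog le_uv : u v / cyc_pos t u <= cyc_pos t v.
  move=> W; case: (leqP (cyc_pos t u) (cyc_pos t v)) => [/W // | /ltnW/W].
  by rewrite cyc_distC [X in _ <= X]cyc_distC.
have := cyc_pos_gap phi_inc le_uv; have := cyc_pos_wrap phi_inc le_uv.
by have := cyc_pos_lt t v; rewrite /cyc_dist; lia.
Qed.

Lemma cyc_increasing_two_gaps h m n0 (phi : 'I_h -> 'I_m)
    (u1 v1 u2 v2 : 'I_h) :
  m <= n0 -> cyc_increasing phi -> val v1 = u1.+1 %% h -> val v2 = u2.+1 %% h ->
  u1 != u2 ->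
  cyc_dist n0 (phi u1) (phi v1) + cyc_dist n0 (phi u2) (phi v2) + h <= n0 + 2.
Proof.
move=> le_mn [t phi_inc] /(cyc_pos_succ t) E1 /(cyc_pos_succ t) E2.
wlog lt12 : u1 v1 u2 v2 E1 E2 / cyc_pos t u1 < cyc_pos t u2.
  move=> W ne12.
  case: (ltngtP (cyc_pos t u1) (cyc_pos t u2)) => [lt | gt | /cyc_pos_inj eq].
  - exact: W.
  - by rewrite [X in X + h]addnC; apply: W => //; rewrite eq_sym.
  - by rewrite eq eqxx in ne12.
move=> _; have := cyc_pos_lt t u2 => lt2.
have {}E1 : cyc_pos t v1 = (cyc_pos t u1).+1 by rewrite E1 modn_small //; lia.
have G1 := cyc_pos_gap phi_inc (u := u1) (v := v1) ltac:(lia).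
have G12 := cyc_pos_gap phi_inc (u := v1) (v := u2) ltac:(lia).
case: (ltnP (cyc_pos t u2).+1 h) => [lt2' | ge2].
- have {}E2 : cyc_pos t v2 = (cyc_pos t u2).+1 by rewrite E2 modn_small.
  have G2 := cyc_pos_gap phi_inc (u := u2) (v := v2) ltac:(lia).
  have W := cyc_pos_wrap phi_inc (u := u1) (v := v2) ltac:(lia).
  by rewrite /cyc_dist; lia.
- have {}E2 : cyc_pos t v2 = 0 by rewrite E2 (_ : _.+1 = h) ?modnn //; lia.
  have G0 := cyc_pos_gap phi_inc (u := v2) (v := u1) ltac:(lia).
  by have := ltn_ord (phi u2); rewrite /cyc_dist; lia.
Qed.

Lemma increasing_cyc_increasing h m (phi : 'I_h -> 'I_m) :
  0 < h -> {homo phi : u v / u < v} -> cyc_increasing phi.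
Proof.
move=> h_gt0 phi_inc; exists (Ordinal h_gt0) => u v /=.
by rewrite !subn0 !modnDr !modn_small //; apply: phi_inc.
Qed.

Section NestedSubmatching.

Variables (n k : nat) (c : coloring n.+1) (j : 'I_2) (g : nat -> nat).
Hypothesis c_sym : sym_coloring c.
Hypothesis g_lt : forall v, v < k -> g v < n.+1./2.
Hypothesis g_incr : forall v w, v < w -> w < k -> g v < g w.
Hypothesis g_col : forall v, v < k -> c (inord (g v)) (inord (n - g v)) = j.

Definition nest_lift (v : 'I_(k.*2)) : 'I_n.+1 :=
  inord (if v < k then g v else n - g ((k.*2).-1 - v)).

Lemma nest_lift_increasing : {homo nest_lift : u v / u < v}.
Proof.
have val_lift v : (nest_lift v : nat) = if v < k then g v else n - g ((k.*2).-1 - v).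
  by rewrite /nest_lift inordK //; case: ifP => [/g_lt | _]; lia.
move=> u v lt_uv; rewrite !val_lift; have := ltn_ord v.
case: ifP => lt_uk; case: ifP => lt_vk lt_v2k.
- exact: g_incr.
- by have := g_lt lt_uk; have := g_lt (v := (k.*2).-1 - v); lia.
- lia.
- have := g_incr (v := (k.*2).-1 - v) (w := (k.*2).-1 - u).
  by have := g_lt (v := (k.*2).-1 - v); lia.
Qed.

Lemma nest_lift_pair (u v : 'I_(k.*2)) :
  u < k -> val v = (k.*2).-1 - u -> c (nest_lift u) (nest_lift v) = j.
Proof.
move=> lt_uk Ev; rewrite /nest_lift Ev lt_uk.
have -> : ((k.*2).-1 - u < k) = false by lia.
have -> : (k.*2).-1 - ((k.*2).-1 - u) = u by lia.
exact: g_col.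
Qed.

Lemma nest_lift_embedding : embedding_in_color (@nest_edge (k.*2)) c j nest_lift.
Proof.
split.
  move=> u v E; apply: ord_inj; case: (ltngtP u v) => // lt;
    by have := nest_lift_increasing lt; rewrite E ltnn.
move=> u v; rewrite /nest_edge doubleK => /orP[] /andP[lt_k /eqP E].
  exact: nest_lift_pair.
by rewrite c_sym; apply: nest_lift_pair.
Qed.

End NestedSubmatching.

Lemma nest_embedding_of_count n k (c : coloring n.+1) j :
  sym_coloring c -> 0 < k ->
  k <= count (fun i => c (inord i) (inord (n - i)) == j) (iota 0 n.+1./2) ->
  exists phi, embedding_in_color (@nest_edge (k.*2)) c j phi /\ cyc_increasing phi.
Proof.
move=> c_sym k_gt0 enough.
set s := [seq i <- iota 0 n.+1./2 | c (inord i) (inord (n - i)) == j].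
have s_mem v : v < k -> nth 0 s v \in s.
  by move=> lt_vk; apply: mem_nth; rewrite size_filter; apply: leq_trans enough.
have s_lt v : v < k -> nth 0 s v < n.+1./2.
  by move=> /s_mem; rewrite mem_filter mem_iota => /andP[_ /andP[]].
have s_col v : v < k -> c (inord (nth 0 s v)) (inord (n - nth 0 s v)) = j.
  by move=> /s_mem; rewrite mem_filter => /andP[/eqP].
have s_incr v w : v < w -> w < k -> nth 0 s v < nth 0 s w.
  move=> lt_vw lt_wk; have s_sorted : sorted ltn s.
    by apply: sorted_filter; [exact: ltn_trans | exact: iota_ltn_sorted].
  have size_s : k <= size s by rewrite size_filter.
  by apply: (sorted_ltn_nth ltn_trans 0 s_sorted) => //; rewrite inE; lia.
exists (@nest_lift n k (nth 0 s)); split; first exact: nest_lift_embedding.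
by apply: increasing_cyc_increasing; [lia | exact: nest_lift_increasing].
Qed.

Lemma nest_cyc_ramsey_upper k l :
  0 < k -> 0 < l ->
  cyc_ramsey_prop (@nest_edge (k.*2)) (@nest_edge (l.*2)) (k.*2 + l.*2 - 2).
Proof.
move=> k_gt0 l_gt0; have -> : k.*2 + l.*2 - 2 = (k.*2 + l.*2 - 3).+1 by lia.
set n := k.*2 + l.*2 - 3 => c c_sym.
pose p i := c (inord i) (inord (n - i)) == ord0.
have := count_predC p (iota 0 n.+1./2); rewrite size_iota.
case: (leqP k (count p (iota 0 n.+1./2))) => [many0 | few0] count_pairs.
  by left; apply: nest_embedding_of_count.
right; apply: nest_embedding_of_count => //.
have -> : count (fun i => c (inord i) (inord (n - i)) == ord_max) (iota 0 n.+1./2)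
        = count (predC p) (iota 0 n.+1./2).
  by apply: eq_count => i; rewrite /= /p; case: (c _ _) => -[|[|]].
lia.
Qed.

Lemma no_short_nest_embedding k m n0 (c : coloring m) j (phi : 'I_(k.*2) -> 'I_m) :
  odd k -> m <= n0 -> (forall x y, c x y = j -> cyc_dist n0 x y < k) ->
  embedding_in_color (@nest_edge (k.*2)) c j phi -> ~ cyc_increasing phi.
Proof.
move=> k_odd le_mn short [_ phi_col] phi_cyc.
have lt_u : k./2 < k.*2 by lia.
have lt_v : k./2 + k < k.*2 by lia.
pose u := Ordinal lt_u; pose v := Ordinal lt_v.
have uv : nest_edge u v by rewrite /nest_edge /=; lia.
have := cyc_increasing_dist u v le_mn phi_cyc; have := short _ _ (phi_col _ _ uv).
by rewrite /cyc_dist /=; lia.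
Qed.

Lemma no_long_nest_embedding k l m n0 (c : coloring m) j (phi : 'I_(l.*2) -> 'I_m) :
  0 < l -> m <= n0 -> n0 + 3 <= (k + l).*2 ->
  (forall x y, c x y = j -> k <= cyc_dist n0 x y) ->
  embedding_in_color (@nest_edge (l.*2)) c j phi -> ~ cyc_increasing phi.
Proof.
move=> l_gt0 le_mn small_n0 long [_ phi_col] phi_cyc.
have lt_u1 : l.-1 < l.*2 by lia.
have lt_v1 : l < l.*2 by lia.
have lt_u2 : (l.*2).-1 < l.*2 by lia.
have lt_v2 : 0 < l.*2 by lia.
pose u1 := Ordinal lt_u1; pose v1 := Ordinal lt_v1.
pose u2 := Ordinal lt_u2; pose v2 := Ordinal lt_v2.
have uv1 : nest_edge u1 v1 by rewrite /nest_edge /=; lia.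
have uv2 : nest_edge u2 v2 by rewrite /nest_edge /=; lia.
have succ1 : val v1 = u1.+1 %% l.*2 by rewrite /= prednK // modn_small.
have succ2 : val v2 = u2.+1 %% l.*2 by rewrite /= prednK ?modnn.
have ne12 : u1 != u2 by apply/eqP => /(congr1 val) /=; lia.
have := cyc_increasing_two_gaps le_mn phi_cyc succ1 succ2 ne12.
by have := long _ _ (phi_col _ _ uv1); have := long _ _ (phi_col _ _ uv2); lia.
Qed.

Definition dist_coloring m n0 d (js jl : 'I_2) : coloring m :=
  fun x y => if cyc_dist n0 x y < d then js else jl.
Arguments dist_coloring : clear implicits.

Lemma dist_coloring_sym m n0 d (js jl : 'I_2) :
  sym_coloring (dist_coloring m n0 d js jl).
Proof. by move=> x y; rewrite /dist_coloring cyc_distC. Qed.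

Section DistanceColoring.

Variables (k l m : nat) (js jl : 'I_2).
Hypotheses (js_jl : js != jl) (k_odd : odd k) (l_gt0 : 0 < l).
Hypothesis le_m : m <= (k + l).*2 - 3.

Let c := dist_coloring m ((k + l).*2 - 3) k js jl.

Lemma dist_coloring_no_short (phi : 'I_(k.*2) -> 'I_m) :
  embedding_in_color (@nest_edge (k.*2)) c js phi -> ~ cyc_increasing phi.
Proof.
apply: no_short_nest_embedding le_m _ => // x y.
by rewrite /c /dist_coloring; case: ifP => // _ /eqP; rewrite eq_sym (negbTE js_jl).
Qed.

Lemma dist_coloring_no_long (phi : 'I_(l.*2) -> 'I_m) :
  embedding_in_color (@nest_edge (l.*2)) c jl phi -> ~ cyc_increasing phi.
Proof.
have k_gt0 : 0 < k by case: k k_odd.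
apply: (no_long_nest_embedding (k := k)) le_m _ _ => //; first lia.
move=> x y; rewrite /c /dist_coloring.
by case: ifP => [_ /eqP | /negbT]; rewrite ?(negbTE js_jl) // -leqNgt.
Qed.

End DistanceColoring.

Lemma nest_cyc_ramsey_lower k l m :
  0 < k -> 0 < l -> odd k || odd l -> m < k.*2 + l.*2 - 2 ->
  ~ cyc_ramsey_prop (@nest_edge (k.*2)) (@nest_edge (l.*2)) m.
Proof.
move=> k_gt0 l_gt0 /orP[k_odd | l_odd] lt_m ramsey.
- have le_m : m <= (k + l).*2 - 3 by lia.
  have := ramsey _ (@dist_coloring_sym m ((k + l).*2 - 3) k ord0 ord_max).
  case=> [[phi [emb cyc]] | [phi [emb cyc]]].
    by apply: (dist_coloring_no_short _ k_odd le_m emb cyc).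
  by apply: (dist_coloring_no_long _ k_odd l_gt0 le_m emb cyc).
- have le_m : m <= (l + k).*2 - 3 by lia.
  have := ramsey _ (@dist_coloring_sym m ((l + k).*2 - 3) l ord_max ord0).
  case=> [[phi [emb cyc]] | [phi [emb cyc]]].
    by apply: (dist_coloring_no_long _ l_odd k_gt0 le_m emb cyc).
  by apply: (dist_coloring_no_short _ l_odd le_m emb cyc).
Qed.

Theorem theorem4p29 (a b : nat) :
  2 <= a -> 2 <= b -> ~~ odd a -> ~~ odd b ->
  (~~ (4 %| a) \/ ~~ (4 %| b)) ->
  Rcyc_eq (@nest_edge a) (@nest_edge b) (a + b - 2).
Proof.
move=> a_ge2 b_ge2 a_even b_even not4.
have [k a_eq] : exists k, a = k.*2 by exists a./2; lia.
have [l b_eq] : exists l, b = l.*2 by exists b./2; lia.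
subst a b; split; first by apply: nest_cyc_ramsey_upper; lia.
by move=> m lt_m; apply: nest_cyc_ramsey_lower => //; lia.
Qed.
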